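(* Let $\Delta$ be a simplicial complex of subsets of $\{1,\dots,n\}$. Then $K_\Delta=\ker\tau_\Delta$ is generated by the following linear forms: for every pair $\mathscr J,\mathcal K\in\Delta$ and every choice of values $c_j\in\{1,\dots,a_j\}$ for $j\in\mathscr J\cap\mathcal K$, the form $$\sum_{\sigma}X_\sigma-\sum_{\rho}X_\rho,$$ where $\sigma$ ranges over tuples with $\sigma_j=c_j$ for $j\in\mathscr J\cap\mathcal K$, $\sigma_j\in\{1,\dots,a_j\}$ arbitrary for $j\in\mathscr J\setminus\mathcal K$, and $\sigma_j=\bullet$ for $j\notin\mathscr J$; and $\rho$ ranges over tuples with $\rho_j=c_j$ for $j\in\mathscr J\cap\mathcal K$, $\rho_j\in\{1,\dots,a_j\}$ arbitrary for $j\in\mathcal K\setminus\mathscr J$, and $\rho_j=\bullet$ for $j\notin\mathcal K$.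
   Context: $\mathbb K$ is a field, $a_1,\dots,a_n$ positive integers, $R=\mathbb K[x_{i_1,\dots,i_n}:1\le i_j\le a_j]$. For a tuple $\sigma$ with $\sigma_j\in\{1,\dots,a_j\}\cup\{+\}$, $x_\sigma$ is the sum of all $x_{i_1,\dots,i_n}$ with $i_j=\sigma_j$ whenever $\sigma_j\ne+$. A simplicial complex $\Delta$ is a nonempty collection of subsets of $\{1,\dots,n\}$ closed under subsets. $S_\Delta$ is the polynomial ring over $\mathbb K$ in variables $X_\sigma$, one for each tuple $\sigma$ with $\sigma_j\in\{1,\dots,a_j\}\cup\{\bullet\}$ and $\{j:\sigma_j\ne\bullet\}\in\Delta$. $\tau_\Delta:S_\Delta\to R$ sends $X_\sigma$ to $x_{\sigma''}$, where $\sigma''$ is $\sigma$ with each $\bullet$ replaced by $+$, and $K_\Delta=\ker\tau_\Delta$. *)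

From HB Require Import structures.
From mathcomp Require Import all_boot all_order all_algebra.
From mathcomp Require Import mpoly.
Set Implicit Arguments. Unset Strict Implicit. Unset Printing Implicit Defensive.
Import GRing.Theory.
Local Open Scope ring_scope.

(* Indices j in {1..n} are 'I_n; values {1..a_j} are 'I_(a j) (0-based).
   The symbol "bullet" is None, a value v is Some v. *)

Definition simplicial_complex (n : nat) (D : {set {set 'I_n}}) : Prop :=
  D != set0 /\ forall A B : {set 'I_n}, B \subset A -> A \in D -> B \in D.

Definition Ridx (n : nat) (a : 'I_n -> nat) : finType := {dffun forall j : 'I_n, 'I_(a j)}.
Definition Stup (n : nat) (a : 'I_n -> nat) : finType := {dffun forall j : 'I_n, option 'I_(a j)}.

Definition supp n (a : 'I_n -> nat) (s : Stup a) : {set 'I_n} :=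
  [set j | s j != None].

Definition Sidx n (a : 'I_n -> nat) (D : {set {set 'I_n}}) : finType :=
  {s : Stup a | supp s \in D}.

Definition Rring (K : fieldType) n (a : 'I_n -> nat) := {mpoly K[#|Ridx a|]}.
Definition xvar (K : fieldType) n (a : 'I_n -> nat) (t : Ridx a) : Rring K a :=
  'X_(enum_rank t).

Definition xplus (K : fieldType) n (a : 'I_n -> nat) (s : Stup a) : Rring K a :=
  \sum_(t : Ridx a | [forall j, if s j is Some v then t j == v else true])
     xvar K t.

Definition Sring (K : fieldType) n (a : 'I_n -> nat) (D : {set {set 'I_n}}) :=
  {mpoly K[#|Sidx a D|]}.
Definition Xvar (K : fieldType) n (a : 'I_n -> nat) (D : {set {set 'I_n}})
  (s : Sidx a D) : Sring K a D := 'X_(enum_rank s).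

Definition tau (K : fieldType) n (a : 'I_n -> nat) (D : {set {set 'I_n}})
  (p : Sring K a D) : Rring K a :=
  p \mPo [tuple xplus K (val (enum_val i) : Stup a) | i < #|Sidx a D|].

Definition K_Delta (K : fieldType) n (a : 'I_n -> nat) (D : {set {set 'I_n}})
  (p : Sring K a D) : Prop := tau p = 0.

Definition pattern n (a : 'I_n -> nat) (J L : {set 'I_n})
  (c : {dffun forall j : 'I_n, 'I_(a j)}) (s : Stup a) : bool :=
  [forall j, if j \in J then (if j \in L then s j == Some (c j) else s j != None)
             else s j == None].

(* the linear form  sum_sigma X_sigma - sum_rho X_rho  for J, L in Delta and
   values c_j (only those with j in J :&: L are used) *)
Definition genform (K : fieldType) n (a : 'I_n -> nat) (D : {set {set 'I_n}})
  (J L : {set 'I_n}) (c : {dffun forall j : 'I_n, 'I_(a j)}) : Sring K a D :=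
  \sum_(s : Sidx a D | pattern J L c (val s)) Xvar K s
  - \sum_(r : Sidx a D | pattern L J c (val r)) Xvar K r.

Definition is_generator (K : fieldType) n (a : 'I_n -> nat) (D : {set {set 'I_n}})
  (g : Sring K a D) : Prop :=
  exists (J L : {set 'I_n}) (c : {dffun forall j : 'I_n, 'I_(a j)}),
    [/\ J \in D, L \in D & g = genform K D J L c].

Definition in_ideal_gen (R : comRingType) (G : R -> Prop) (p : R) : Prop :=
  exists s : seq (R * R), (forall x, x \in s -> G x.2) /\
    p = \sum_(x <- s) x.1 * x.2.

(* Each generator lies in the kernel: both of its sums map under tau to the sum
   of the x_t with t_j = c_j on J :&: L.  Conversely, call sigma free if none of
   its entries is the first value of its coordinate.  A Moebius inversion in each
   coordinate gives a K-algebra map theta : R -> S_Delta with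
   theta (tau X_sigma) = X_sigma for free sigma.  If sigma has the first value at
   j, the generator for J = supp sigma, L = J :\ j writes X_sigma, modulo the
   ideal, through variables that agree with sigma off j and are not first-valued
   at j; induction on the number of first-valued entries gives
   X_sigma = theta (tau X_sigma) modulo the ideal for all sigma, hence
   p = theta (tau p) modulo the ideal for every p, and p lies in the ideal when
   tau p = 0. *)

From HB Require Import structures.
From mathcomp Require Import all_boot all_order all_algebra.
From mathcomp Require Import mpoly ring.
Set Implicit Arguments. Unset Strict Implicit. Unset Printing Implicit Defensive.
Import GRing.Theory.
Local Open Scope ring_scope.

Lemma bigA_distr_dffun (R : comPzSemiRingType) (I : finType) (T_ : I -> finType)
    (F : forall i, T_ i -> R) :
  \prod_i \sum_(x : T_ i) F i x = \sum_(t : {dffun forall i, T_ i}) \prod_i F i (t i).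
Proof.
pose P_ i : {ffun T_ i -> R} := [ffun x => F i x].
rewrite (reindex (@dffun_of_fprod I T_)) /=; last exact/onW_bij/dffun_of_fprod_bij.
transitivity (\sum_(t : fprod T_) \prod_(i in I) P_ i (t i)); last first.
  by apply: eq_bigr => t _; apply: eq_bigr => i _; rewrite !ffunE.
transitivity (\prod_i \sum_(x : T_ i) P_ i x).
  by apply: eq_bigr => i _; apply: eq_bigr => x _; rewrite ffunE.
under eq_bigr => i _ do rewrite (big_tag P_ i).
by rewrite bigA_distr_big_dep big_fprod.
Qed.

Lemma prodr_natb (R : comPzSemiRingType) (T : finType) (P : pred T) :
  \prod_(i : T) ((P i)%:R : R) = [forall i, P i]%:R.
Proof.
have [/forallP P_T | /forallPn [i Pi]] := boolP [forall i, P i].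
  by rewrite big1 // => i _; rewrite P_T.
by rewrite (bigD1 i) //= (negbTE Pi) mul0r.
Qed.

Lemma sumr_eq_natbM (R : pzSemiRingType) (T : finType) (v : T) (F : T -> R) :
  \sum_(x : T) (x == v)%:R * F x = F v.
Proof. by rewrite (bigD1 v) //= eqxx mul1r big1 ?addr0 // => x /negbTE ->; rewrite mul0r. Qed.

Lemma sumr_eq_natb (R : pzSemiRingType) (T : finType) (v : T) :
  \sum_(x : T) ((x == v)%:R : R) = 1.
Proof. by rewrite (bigD1 v) //= eqxx big1 ?addr0 // => x /negbTE ->. Qed.

Section IdealGen.
Variables (R : comNzRingType) (G : R -> Prop).
Local Notation I := (in_ideal_gen G).

Lemma in_ideal_gen0 : I 0.
Proof. by exists [::]; rewrite big_nil. Qed.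

Lemma mem_ideal_gen g : G g -> I g.
Proof.
by move=> Gg; exists [:: (1, g)]; rewrite big_seq1 mul1r; split=> // x /[!inE] /eqP->.
Qed.

Lemma in_ideal_genD p q : I p -> I q -> I (p + q).
Proof.
move=> [s [Gs ->]] [t [Gt ->]]; exists (s ++ t); rewrite big_cat; split=> // x.
by rewrite mem_cat => /orP[/Gs|/Gt].
Qed.

Lemma in_ideal_genMl r p : I p -> I (r * p).
Proof.
move=> [s [Gs ->]]; exists [seq (r * x.1, x.2) | x <- s]; split.
  by move=> x /mapP[y /Gs ? ->].
by rewrite big_map mulr_sumr; apply: eq_bigr => x _; rewrite mulrA.
Qed.

Lemma in_ideal_genB p q : I p -> I q -> I (p - q).
Proof. by move=> Ip Iq; rewrite -mulN1r; apply/in_ideal_genD/in_ideal_genMl. Qed.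

Lemma in_ideal_gen_sum (T : Type) (r : seq T) (P : pred T) (F : T -> R) :
  (forall i, P i -> I (F i)) -> I (\sum_(i <- r | P i) F i).
Proof. by move=> IF; apply: big_ind => //; [exact: in_ideal_gen0 | exact: in_ideal_genD]. Qed.

Lemma in_ideal_gen_sub_from_ker (f : {additive R -> R}) x y z :
  I (x + y - z) -> f (x + y - z) = 0 -> I (y - f y) -> I (z - f z) -> I (x - f x).
Proof.
move=> Ig fg0 Iy Iz; rewrite raddfB raddfD in fg0.
have -> : x - f x = (x + y - z) - (y - f y) + (z - f z) - (f x + f y - f z).
  by move: (f x) (f y) (f z) => u v w; ring.
by rewrite fg0 subr0; apply/in_ideal_genD => //; apply/in_ideal_genB.
Qed.

Lemma rmorph_ideal_gen_eq0 (S : pzRingType) (f : {rmorphism R -> S}) p :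
  (forall g, G g -> f g = 0) -> I p -> f p = 0.
Proof.
move=> fG [s [Gs ->]]; rewrite rmorph_sum big1_seq // => x /andP[_ /Gs /fG fx].
by rewrite rmorphM fx mulr0.
Qed.

End IdealGen.

Lemma in_ideal_gen_sub_mpoly_rmorph (R : comNzRingType) (k : nat)
    (G : {mpoly R[k]} -> Prop) (f : {rmorphism {mpoly R[k]} -> {mpoly R[k]}}) :
  (forall c, f c%:MP = c%:MP) -> (forall i, in_ideal_gen G ('X_i - f 'X_i)) ->
  forall p, in_ideal_gen G (p - f p).
Proof.
move=> fC IX p; pose Q q := in_ideal_gen G (q - f q).
have QD x y : Q x -> Q y -> Q (x + y).
  by move=> Qx Qy; rewrite /Q rmorphD opprD addrACA; apply: in_ideal_genD.
have QM x y : Q x -> Q y -> Q (x * y).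
  move=> Qx Qy; rewrite /Q rmorphM.
  have -> : x * y - f x * f y = y * (x - f x) + f x * (y - f y).
    by rewrite !mulrBr [y * x]mulrC [y * f x]mulrC addrA subrK.
  by apply: in_ideal_genD; apply: in_ideal_genMl.
have QC c : Q c%:MP by rewrite /Q fC subrr; apply: in_ideal_gen0.
have Q1 : Q 1 by rewrite -mpolyC1.
rewrite [p]mpolyE; apply: (big_ind Q _ QD) => [|m _]; first by rewrite -mpolyC0.
rewrite -mul_mpolyC; apply/(QM _ _ (QC _)).
rewrite mpolyXE_id; apply: (big_ind Q Q1 QM) => i _.
by elim: (m i) => [|e IHe]; rewrite ?expr0 // exprS; apply: QM (IX i) IHe.
Qed.

Section Kernel.
Variables (K : fieldType) (n : nat) (a : 'I_n -> nat) (D : {set {set 'I_n}}).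
Hypothesis a_gt0 : forall j, (0 < a j)%N.
Implicit Types (J L : {set 'I_n}) (c t : Ridx a) (s : Stup a).

Definition specializes t s : bool :=
  [forall j, if s j is Some v then t j == v else true].

Definition restrict J c : Stup a :=
  [ffun j => if j \in J then Some (c j) else None].

Definition agrees_on (A : {set 'I_n}) c t : bool := [forall j in A, t j == c j].

Lemma supp_restrict J c : supp (restrict J c) = J.
Proof. by apply/setP => j; rewrite inE ffunE; case: (j \in J). Qed.

Lemma pattern_specializes J L c t s :
  pattern J L c s && specializes t s = (s == restrict J t) && agrees_on (J :&: L) c t.
Proof.
apply/andP/andP => [[/forallP Ps /forallP St] | [/eqP -> /forall_inP Atc]].
  split.
    apply/eqP/ffunP => j; rewrite ffunE; move: (Ps j) (St j).
    by case: (j \in J); case: (j \in L); case: (s j) => // v _ /eqP ->.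
  apply/forall_inP => j /setIP[jJ jL]; move: (Ps j) (St j).
  by rewrite jJ jL => /eqP ->.
split; apply/forallP => j; rewrite ffunE.
  case jJ: (j \in J); case jL: (j \in L) => //=.
  by rewrite (eqP (Atc j _)) // inE jJ jL.
by case: (j \in J).
Qed.

Lemma pattern_restrict J L c : pattern J L c (restrict J c).
Proof. by apply/forallP => j; rewrite ffunE; case: (j \in J); case: (j \in L). Qed.

Lemma pattern_sub J L c s : J \subset L -> pattern J L c s = (s == restrict J c).
Proof.
move=> /subsetP JL; apply/idP/eqP => [/forallP Ps | ->]; last exact: pattern_restrict.
apply/ffunP => j; rewrite ffunE; move: (Ps j).
by case: ifP => [/JL -> /eqP|_ /eqP].
Qed.

Lemma pattern_setD1 J j c s :
  pattern J (J :\ j) c s -> forall i, i != j -> s i = restrict J c i.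
Proof.
move=> /forallP Ps i ij; move: (Ps i); rewrite !inE ffunE ij /=.
by case: (i \in J) => /eqP.
Qed.

Lemma pattern_setD1_restrict J j c s :
  pattern J (J :\ j) c s -> s j = Some (c j) -> s = restrict J c.
Proof.
move=> Ps sj; apply/ffunP => i; have [-> | ij] := eqVneq i j; last exact: pattern_setD1 Ps i ij.
by move/forallP/(_ j): Ps; rewrite sj !inE eqxx ffunE /=; case: (j \in J).
Qed.

Definition dflt j : 'I_(a j) := Ordinal (a_gt0 j).

Definition fill s : Ridx a := [ffun j => odflt (dflt j) (s j)].

Lemma restrict_fill s : restrict (supp s) (fill s) = s.
Proof. by apply/ffunP => j; rewrite !ffunE inE; case: (s j). Qed.

Definition dflt_entries s : {set 'I_n} := [set j | s j == Some (dflt j)].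

Lemma dflt_entries0P s : reflect (forall j, s j != Some (dflt j)) (dflt_entries s == set0).
Proof.
apply: (iffP eqP) => [/setP Z j | Z]; first by have := Z j; rewrite !inE => ->.
by apply/setP => j; rewrite !inE (negbTE (Z j)).
Qed.

Lemma card_dflt_entries_lt s s' j : (forall i, i != j -> s i = s' i) ->
  j \notin dflt_entries s -> j \in dflt_entries s' ->
  (#|dflt_entries s| < #|dflt_entries s'|)%N.
Proof.
move=> ss' jNs js'; apply/proper_card/properP; split; last by exists j.
apply/subsetP => i; have [-> | ij] := eqVneq i j; first by rewrite (negbTE jNs).
by rewrite !inE ss'.
Qed.

(* theta sends x_v to X_v for v <> dflt j, and x_(dflt j) to
   X_bullet - \sum_(v <> dflt j) X_v, one coordinate at a time. *)
Definition mobius j (o : option 'I_(a j)) (x : 'I_(a j)) : K :=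
  if o is Some v then (x == v)%:R - (x == dflt j)%:R else (x == dflt j)%:R.

Lemma sum_mobius j (o o' : option 'I_(a j)) :
  o != Some (dflt j) -> o' != Some (dflt j) ->
  \sum_x ((if o is Some v then x == v else true) : bool)%:R * mobius o' x = (o == o')%:R.
Proof.
case: o => [v|] vN0 v'N0.
  have vd : v != dflt j by apply: contra vN0 => /eqP ->.
  rewrite sumr_eq_natbM; case: o' v'N0 => [v'|] _ /=; last by rewrite (negbTE vd).
  by rewrite (negbTE vd) subr0 (inj_eq Some_inj).
under eq_bigr => x _ do rewrite mul1r.
by case: o' v'N0 => [v'|] _ /=; rewrite ?sumrB !sumr_eq_natb ?subrr.
Qed.

Definition theta_coef s t : K := \prod_j mobius (s j) (t j).

Lemma sum_theta_coef s s' : dflt_entries s == set0 -> dflt_entries s' == set0 ->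
  \sum_(t | specializes t s) theta_coef s' t = (s == s')%:R.
Proof.
move=> /dflt_entries0P s_free /dflt_entries0P s'_free.
transitivity (\sum_(t : Ridx a) \prod_j
    (((if s j is Some v then t j == v else true) : bool)%:R * mobius (s' j) (t j))).
  rewrite big_mkcond; apply: eq_bigr => t _.
  rewrite big_split prodr_natb /= -/(specializes t s).
  by case: (specializes t s); rewrite ?mul1r ?mul0r.
rewrite -(bigA_distr_dffun (fun j x =>
  ((if s j is Some v then x == v else true) : bool)%:R * mobius (s' j) x)).
under eq_bigr => j _ do rewrite (sum_mobius (s_free j) (s'_free j)).
rewrite prodr_natb; congr (nat_of_bool _)%:R.
apply/idP/eqP => [/forallP s_s' | ->]; last exact/forallP.
by apply/ffunP => j; apply/eqP/s_s'.
Qed.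

Lemma xplusE s : xplus K s = \sum_(t | specializes t s) xvar K t.
Proof. by []. Qed.

HB.instance Definition _ := GRing.RMorphism.copy (@tau K n a D) (comp_mpoly _).

Lemma tau_Xvar (s : Sidx a D) : tau (Xvar K s) = xplus K (val s).
Proof. by rewrite /tau /Xvar comp_mpolyXU -tnth_nth tnth_mktuple enum_rankK. Qed.

Lemma sum_pattern_xplus J L c : J \in D ->
  \sum_(s : Sidx a D | pattern J L c (val s)) xplus K (val s)
  = \sum_(t | agrees_on (J :&: L) c t) xvar K t.
Proof.
move=> JD; rewrite (exchange_big_dep xpredT) //= [RHS]big_mkcond /=.
apply: eq_bigr => t _.
under eq_bigl => s do rewrite pattern_specializes.
case: (agrees_on _ c t); last by rewrite big_pred0 // => s; rewrite andbF.
have tJD : supp (restrict J t) \in D by rewrite supp_restrict.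
rewrite (eq_bigl (pred1 (exist _ (restrict J t) tJD : Sidx a D))) ?big_pred1_eq // => s.
by rewrite andbT.
Qed.

Lemma tau_genform J L c : J \in D -> L \in D -> tau (genform K D J L c) = 0.
Proof.
move=> JD LD; rewrite rmorphB !rmorph_sum /=.
under eq_bigr => s _ do rewrite tau_Xvar.
under [X in _ - X]eq_bigr => s _ do rewrite tau_Xvar.
by rewrite !sum_pattern_xplus // setIC subrr.
Qed.

Definition theta_tuple := [tuple \sum_(u : Sidx a D | dflt_entries (val u) == set0)
  theta_coef (val u) (enum_val i) *: Xvar K u | i < #|Ridx a|].

Definition theta : Rring K a -> Sring K a D := comp_mpoly theta_tuple.

HB.instance Definition _ := GRing.RMorphism.copy theta (comp_mpoly theta_tuple).

Lemma theta_xvar t : theta (xvar K t) =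
  \sum_(u : Sidx a D | dflt_entries (val u) == set0) theta_coef (val u) t *: Xvar K u.
Proof. by rewrite /theta /xvar comp_mpolyXU -tnth_nth tnth_mktuple enum_rankK. Qed.

Lemma theta_xplus (s : Sidx a D) : dflt_entries (val s) == set0 ->
  theta (xplus K (val s)) = Xvar K s.
Proof.
move=> s_free; rewrite xplusE rmorph_sum /=.
under eq_bigr => t _ do rewrite theta_xvar.
rewrite exchange_big /=.
under eq_bigr => u u_free do rewrite -scaler_suml sum_theta_coef //.
rewrite (bigD1 s) //= eqxx scale1r big1 ?addr0 // => u /andP[_ us].
by rewrite eq_sym val_eqE (negbTE us) scale0r.
Qed.


Local Notation E := (theta \o @tau K n a D).

Lemma genform_setD1 J j c (σ ρ : Sidx a D) :
  val σ = restrict J c -> val ρ = restrict (J :\ j) c ->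
  genform K D J (J :\ j) c
  = Xvar K σ + \sum_(s | pattern J (J :\ j) c (val s) && (s != σ)) Xvar K s - Xvar K ρ.
Proof.
move=> σE ρE; rewrite /genform (bigD1 σ) /= ?σE ?pattern_restrict //; congr (_ - _).
rewrite (eq_bigl (pred1 ρ)) ?big_pred1_eq // => r.
by rewrite pattern_sub ?subsetDl // -ρE val_eqE.
Qed.

Hypothesis HD : simplicial_complex D.

Lemma in_ideal_gen_sub_theta_tau_Xvar (σ : Sidx a D) :
  in_ideal_gen (@is_generator K n a D) (Xvar K σ - E (Xvar K σ)).
Proof.
have [m] := ubnP #|dflt_entries (val σ)|; elim: m σ => // m IH σ /ltnSE σ_m.
have [σ_free | /set0Pn [j jσ]] := eqVneq (dflt_entries (val σ)) set0.
  by rewrite /= tau_Xvar theta_xplus ?σ_free // subrr; apply: in_ideal_gen0.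
set J := supp (val σ); set c := fill (val σ).
have σE : val σ = restrict J c by rewrite restrict_fill.
have JD : J \in D := valP σ.
have LD : J :\ j \in D by apply: HD.2 JD; apply: subsetDl.
have ρD : supp (restrict (J :\ j) c) \in D by rewrite supp_restrict.
pose ρ : Sidx a D := exist _ (restrict (J :\ j) c) ρD.
have IH_at (s : Sidx a D) : (forall i, i != j -> val s i = val σ i) ->
    j \notin dflt_entries (val s) ->
    in_ideal_gen (@is_generator K n a D) (Xvar K s - E (Xvar K s)).
  by move=> sσ js; apply/IH/(leq_trans _ σ_m)/(card_dflt_entries_lt sσ).
have c_j : c j = dflt j by move: jσ; rewrite inE ffunE => /eqP ->.
pose S := \sum_(s | pattern J (J :\ j) c (val s) && (s != σ)) Xvar K s.
have gE : genform K D J (J :\ j) c = Xvar K σ + S - Xvar K ρ.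
  exact: genform_setD1 σE (erefl (val ρ)).
apply: (in_ideal_gen_sub_from_ker (f := E) (y := S) (z := Xvar K ρ)); rewrite -?gE.
- by apply: mem_ideal_gen; exists J, (J :\ j), c.
- by rewrite /= tau_genform ?rmorph0.
- rewrite /S (raddf_sum E) -sumrB; apply: in_ideal_gen_sum => s /andP[Ps sσ].
  apply: IH_at => [i ij | ]; first by rewrite σE; apply: pattern_setD1 Ps i ij.
  apply: contra sσ; rewrite inE -c_j => /eqP sj.
  by apply/eqP/val_inj; rewrite σE; apply: pattern_setD1_restrict Ps sj.
- apply: IH_at => [i ij | ]; first by rewrite σE !ffunE !inE ij.
  by rewrite inE ffunE !inE eqxx.
Qed.

Lemma in_ideal_gen_sub_theta_tau p :
  in_ideal_gen (@is_generator K n a D) (p - E p).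
Proof.
apply: in_ideal_gen_sub_mpoly_rmorph => [c | i]; first by rewrite /= /tau /theta !comp_mpolyC.
by rewrite -[i]enum_valK; apply: in_ideal_gen_sub_theta_tau_Xvar.
Qed.

End Kernel.

Theorem proposition3p2 (K : fieldType) (n : nat) (a : 'I_n -> nat)
  (Hpos : forall j, (0 < a j)%N)
  (D : {set {set 'I_n}}) (HD : simplicial_complex D) :
  forall p : Sring K a D,
    K_Delta p <-> in_ideal_gen (@is_generator K n a D) p.
Proof.
move=> p; split=> [tau_p | Ip]; last first.
  apply: (rmorph_ideal_gen_eq0 (f := @tau K n a D)) Ip => _ [J [L [c [JD LD ->]]]].
  exact: tau_genform.
by have := in_ideal_gen_sub_theta_tau Hpos HD p; rewrite /= tau_p rmorph0 subr0.
Qed.
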